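(* Let $G$ be a simple graph of order $n$ with adjacency eigenvalues $\lambda_1,\lambda_2,\dots,\lambda_n$ (listed with multiplicity), and let $G^l$ be the graph obtained from $G$ by adding a loop on each vertex of $G$. Let $(G\cup G^l)_n$ denote the disjoint union of $G$ and $G^l$, a graph of order $2n$ with exactly $n$ self-loops. If $|\lambda_i|\ge \frac12$ for each $i=1,2,\dots,n$, then $E\big((G\cup G^l)_n\big)=2E(G)$.
   Context: For a simple graph $G$ with adjacency matrix $A(G)$ and eigenvalues $\lambda_1,\dots,\lambda_n$, the energy is $E(G)=\sum_{i=1}^n|\lambda_i|$. For a graph $G_\sigma$ of order $N$ obtained from a simple graph by attaching self-loops on $\sigma$ of its vertices, the adjacency matrix is $A(G_\sigma)=A(G)+I_\sigma$, where $I_\sigma$ is the $N\times N$ diagonal matrix with exactly $\sigma$ ones on the diagonal (at the looped vertices) and zeros elsewhere; if $\mu_1,\dots,\mu_N$ are the eigenvalues of $A(G_\sigma)$, its energy is $E(G_\sigma)=\sum_{i=1}^N\left|\mu_i-\frac{\sigma}{N}\right|$. The subscript in $(G\cup G^l)_n$ indicates the number of loops $\sigma=n$. *)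

From HB Require Import structures.
From mathcomp Require Import all_boot all_order all_algebra.
From mathcomp Require Import reals.
Set Implicit Arguments. Unset Strict Implicit. Unset Printing Implicit Defensive.
Import Order.TTheory GRing.Theory Num.Theory.
Local Open Scope ring_scope.

Section Defs.
Variable R : realType.

Definition adjmx n (e : rel 'I_n) : 'M[R]_n := \matrix_(i, j) (e i j)%:R.

Definition loopmx n (L : {set 'I_n}) : 'M[R]_n :=
  \matrix_(i, j) ((i == j) && (i \in L))%:R.

Definition is_eigenvalues n (A : 'M[R]_n) (s : seq R) : Prop :=
  char_poly A = \prod_(x <- s) ('X - x%:P).

Definition energy (s : seq R) : R := \sum_(x <- s) `|x|.

(* Energy of a graph of order N with sigma loops, from its eigenvalue list. *)
Definition loop_energy (N sigma : nat) (s : seq R) : R :=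
  \sum_(x <- s) `|x - sigma%:R / N%:R|.
End Defs.

(* Disjoint union of two copies of the graph e on 'I_n, on vertex set 'I_(n+n):
   first copy = lshift, second copy = rshift. *)
Definition dunion n (e : rel 'I_n) : rel 'I_(n + n) :=
  fun i j => match split i, split j with
             | inl a, inl b => e a b
             | inr a, inr b => e a b
             | _, _ => false
             end.

(* Loops on every vertex of the second copy (this copy is G^l). *)
Definition second_copy n : {set 'I_(n + n)} := [set i : 'I_(n + n) | (n <= i)%N].

From HB Require Import structures.
From mathcomp Require Import all_boot all_order all_algebra.
From mathcomp Require Import reals.
From mathcomp Require Import ring lra.
Set Implicit Arguments. Unset Strict Implicit. Unset Printing Implicit Defensive.
Import Order.TTheory GRing.Theory Num.Theory.
Local Open Scope ring_scope.

(* The matrix of (G u G^l)_n is block diagonal with blocks A(G) and A(G) + I,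
   so its spectrum is the lambda_i together with the lambda_i + 1, while
   sigma / N = n / 2n = 1/2.  Each lambda_i therefore contributes
   |lambda_i - 1/2| + |lambda_i + 1/2| to the energy, and this equals
   2 |lambda_i| precisely because |lambda_i| >= 1/2. *)

Lemma split_lshift m n (i : 'I_m) : split (lshift n i) = inl i.
Proof. exact: (unsplitK (inl i)). Qed.

Lemma split_rshift m n (i : 'I_n) : split (rshift m i) = inr i.
Proof. exact: (unsplitK (inr i)). Qed.

Lemma adjmx_dunion_second_copy (R : realType) n (e : rel 'I_n) :
  adjmx R (dunion e) + loopmx R (second_copy n) =
  block_mx (adjmx R e) 0 0 (adjmx R e + 1%:M).
Proof.
rewrite -[LHS]submxK; congr block_mx; apply/matrixP => i j;
  rewrite !mxE /dunion ?split_lshift ?split_rshift inE /= ?eq_lshift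
    ?eq_rshift ?eq_rlshift ?eq_lrshift /= ?addr0 //.
- by rewrite leqNgt ltn_ord andbF addr0.
- by rewrite leq_addr andbT.
Qed.

Lemma char_poly_block_diag (R : comNzRingType) m n
    (A : 'M[R]_m) (B : 'M[R]_n) :
  char_poly (block_mx A 0 0 B) = char_poly A * char_poly B.
Proof. by rewrite /char_poly char_block_diag_mx det_ublock. Qed.

Lemma char_poly_add_scalar (R : comNzRingType) n (A : 'M[R]_n) (a : R) :
  char_poly (A + a%:M) = char_poly A \Po ('X - a%:P).
Proof.
rewrite /char_poly -det_map_mx; congr (\det _); apply/matrixP => i j.
rewrite !mxE; case: (i == j); rewrite /= ?mulr1n ?mulr0n ?addr0 raddfB /=;
  by rewrite ?comp_polyX !comp_polyC ?polyCD ?polyC0; ring.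
Qed.

Section Eigenvalues.

Variable R : realType.

Lemma size_eigenvalues n (A : 'M[R]_n) s :
  is_eigenvalues A s -> size s = n.
Proof.
move=> eig_s; apply/eqP; rewrite -eqSS.
by rewrite -(size_prod_XsubC s id) -eig_s size_char_poly.
Qed.

Lemma eigenvalues_perm_eq n (A : 'M[R]_n) s t :
  is_eigenvalues A s -> is_eigenvalues A t -> perm_eq s t.
Proof. by move=> eig_s eig_t; apply: prod_XsubC_eq; rewrite -eig_s -eig_t. Qed.

Lemma eigenvalues_block_diag m n (A : 'M[R]_m) (B : 'M[R]_n) s t :
  is_eigenvalues A s -> is_eigenvalues B t ->
  is_eigenvalues (block_mx A 0 0 B) (s ++ t).
Proof.
move=> eig_s eig_t.
by rewrite /is_eigenvalues char_poly_block_diag big_cat eig_s eig_t.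
Qed.

Lemma eigenvalues_add_scalar n (A : 'M[R]_n) s (a : R) :
  is_eigenvalues A s -> is_eigenvalues (A + a%:M) [seq x + a | x <- s].
Proof.
move=> eig_s; rewrite /is_eigenvalues char_poly_add_scalar eig_s big_map.
rewrite rmorph_prod; apply: eq_bigr => x _.
rewrite raddfB /= comp_polyX comp_polyC polyCD; ring.
Qed.

End Eigenvalues.

Lemma norm_subr_half_add_norm_addr_half (R : realFieldType) (x : R) :
  1 / 2 <= `|x| -> `|x - 1 / 2| + `|x + 1 / 2| = 2 * `|x|.
Proof.
have [x_ge0|x_lt0] := lerP 0 x.
- rewrite (ger0_norm x_ge0) => x_ge; rewrite !ger0_norm; lra.
- rewrite (ltr0_norm x_lt0) => x_le; rewrite !ler0_norm; lra.
Qed.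

Theorem theorem1 (R : realType) (n : nat) (e : rel 'I_n) :
  symmetric e -> irreflexive e ->
  forall (s t : seq R),
  is_eigenvalues (adjmx R e) s ->
  is_eigenvalues (adjmx R (dunion e) + loopmx R (second_copy n)) t ->
  (forall x, x \in s -> 1 / 2 <= `|x|) ->
  loop_energy (n + n) n t = 2 * energy s.
Proof.
move=> _ _ s t eig_s eig_t s_ge_half.
have eig_st : is_eigenvalues (adjmx R (dunion e) + loopmx R (second_copy n))
                (s ++ [seq x + 1 | x <- s]).
  rewrite adjmx_dunion_second_copy.
  exact/eigenvalues_block_diag/eigenvalues_add_scalar.
rewrite /loop_energy /energy (perm_big _ (eigenvalues_perm_eq eig_t eig_st)).
rewrite big_cat big_map /= -big_split mulr_sumr /=.
have [->|s_neq0] := eqVneq s [::]; first by rewrite !big_nil.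
have n_gt0 : (0 < n)%N.
  by rewrite -(size_eigenvalues eig_s) lt0n size_eq0.
have -> : n%:R / (n + n)%:R = 1 / 2 :> R.
  by rewrite natrD -mulr2n -mulr_natr; field; rewrite pnatr_eq0 -lt0n.
apply: eq_big_seq => x /s_ge_half/norm_subr_half_add_norm_addr_half <-.
by congr (_ + `|_|); lra.
Qed.
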